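(* Let $A=\{a_1,\dots,a_k\}$ be finite and $u_1,u_2:A\to\mathbb{R}$. In every subgame-perfect Nash equilibrium $\sigma=(\sigma_1,\sigma_2)$ of the two-player Price \& Choose game, player 1's price vector is $\sigma_1=p^*$, where $p^*_j=u_2(a_j)-\mathrm{Avg}_2$ for all $j$ (the unique price vector in $P$ making player 2 indifferent among all options).
   Context: Two players with quasi-linear utilities: if option $a\in A$ is selected and player $i$ receives transfer $t_i$, player $i$'s utility is $u_i(a)+t_i$. Let $P=\{p\in\mathbb{R}^k:\sum_{j=1}^k p_j=0\}$ and $\mathrm{Avg}_2=\frac1k\sum_{j}u_2(a_j)$. The Price \& Choose game: player 1 chooses $p\in P$; then player 2, having observed $p$, chooses $a_j\in A$ and pays $p_j$ to player 1; payoffs $g_1(p,a_j)=u_1(a_j)+p_j$, $g_2(p,a_j)=u_2(a_j)-p_j$. A pure strategy profile $\sigma=(\sigma_1,\sigma_2)$, $\sigma_1\in P$, $\sigma_2:P\to A$, is a subgame-perfect Nash equilibrium if $\sigma_2(p)\in\arg\max_{a}g_2(p,a)$ for every $p\in P$ and $g_1(\sigma_1,\sigma_2(\sigma_1))\ge g_1(p,\sigma_2(p))$ for all $p\in P$. *)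

From mathcomp Require Import all_boot all_order all_algebra.
Set Implicit Arguments. Unset Strict Implicit. Unset Printing Implicit Defensive.
Import Order.TTheory GRing.Theory Num.Theory.
Local Open Scope ring_scope.

Definition in_P (R : realFieldType) (k : nat) (p : 'I_k -> R) : Prop :=
  \sum_(j < k) p j = 0.

Definition priceP (R : realFieldType) (k : nat) := {p : 'I_k -> R | in_P p}.

Definition g1 (R : realFieldType) (k : nat) (u1 : 'I_k -> R)
  (p : 'I_k -> R) (j : 'I_k) : R := u1 j + p j.
Definition g2 (R : realFieldType) (k : nat) (u2 : 'I_k -> R)
  (p : 'I_k -> R) (j : 'I_k) : R := u2 j - p j.

Definition is_SPNE (R : realFieldType) (k : nat) (u1 u2 : 'I_k -> R)
  (s1 : priceP R k) (s2 : priceP R k -> 'I_k) : Prop :=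
  (forall (p : priceP R k) (j : 'I_k), g2 u2 (proj1_sig p) j <= g2 u2 (proj1_sig p) (s2 p))
  /\ (forall p : priceP R k, g1 u1 (proj1_sig p) (s2 p) <= g1 u1 (proj1_sig s1) (s2 s1)).

Definition avg2 (R : realFieldType) (k : nat) (u2 : 'I_k -> R) : R :=
  (k%:R)^-1 * \sum_(j < k) u2 j.

From mathcomp Require Import all_boot all_order all_algebra.
From mathcomp Require Import ring lra.
Set Implicit Arguments. Unset Strict Implicit. Unset Printing Implicit Defensive.
Import Order.TTheory GRing.Theory Num.Theory.
Local Open Scope ring_scope.

(* Since prices sum to zero, player 2's payoffs u2 j - p j average to Avg2, so
   the best payoff c available to player 2 is at least Avg2, with equality only
   at p*.  If c > Avg2 at an equilibrium with chosen option a, player 1 may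
   raise the prices of all options other than a by (c - Avg2)/k and lower the
   price of a so that a remains player 2's unique best reply, strictly gaining
   (c - Avg2)/k.  Hence c = Avg2 and the equilibrium price is p*. *)

Lemma eq_const_of_sum_le (R : numDomainType) (k : nat) (F : 'I_k -> R) (c : R) :
  (forall i, F i <= c) -> \sum_(i < k) F i = k%:R * c -> forall i, F i = c.
Proof.
move=> F_le_c sumF i.
have sum_gap : \sum_(i < k) (c - F i) = 0.
  by rewrite sumrB sumF sumr_const card_ord mulr_natl subrr.
have gap_ge0 : forall i, predT i -> 0 <= c - F i by move=> ? _; rewrite subr_ge0.
by apply/esym/eqP; rewrite -subr_eq0; apply/eqP/(psumr_eq0P gap_ge0 sum_gap).
Qed.

Section PriceAndChoose.

Variables (R : realFieldType) (k : nat) (u1 u2 : 'I_k -> R).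

Lemma natr_ord_gt0 (a : 'I_k) : 0 < k%:R :> R.
Proof. by rewrite ltr0n (leq_ltn_trans (leq0n a) (ltn_ord a)). Qed.

Lemma mulr_natl_avg2 : k%:R * avg2 u2 = \sum_(j < k) u2 j.
Proof.
rewrite /avg2; case: k u2 => [|n] v; first by rewrite big_ord0 mul0r.
by rewrite mulrA mulfV ?mul1r // pnatr_eq0.
Qed.

Lemma sum_g2 (p : 'I_k -> R) : in_P p -> \sum_(j < k) g2 u2 p j = k%:R * avg2 u2.
Proof. by rewrite /in_P /g2 sumrB mulr_natl_avg2 => ->; rewrite subr0. Qed.

(* The deviation of player 1: p* shifted by d/k everywhere, and by -d at a. *)
Definition tilted_price (a : 'I_k) (d : R) (j : 'I_k) : R :=
  u2 j - avg2 u2 + d / k%:R - (j == a)%:R * d.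

Lemma tilted_price_in_P (a : 'I_k) (d : R) : in_P (tilted_price a d).
Proof.
have k_neq0 : k%:R != 0 :> R by rewrite gt_eqF ?(natr_ord_gt0 a).
rewrite /in_P /tilted_price sumrB big_split sumrB !sumr_const card_ord.
rewrite -[avg2 u2 *+ _]mulr_natl -[d / _ *+ _]mulr_natl mulr_natl_avg2 subrr.
rewrite /= add0r mulrC divfK //.
rewrite (bigD1 a) //= eqxx mul1r big1 ?addr0 ?subrr // => j /negPf ->.
by rewrite mul0r.
Qed.

Lemma g2_tilted_price (a : 'I_k) (d : R) (j : 'I_k) :
  g2 u2 (tilted_price a d) j = avg2 u2 - d / k%:R + (j == a)%:R * d.
Proof. by rewrite /g2 /tilted_price; ring. Qed.

Lemma best_reply_tilted_price (a b : 'I_k) (d : R) : 0 < d ->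
  (forall j, g2 u2 (tilted_price a d) j <= g2 u2 (tilted_price a d) b) -> b = a.
Proof.
move=> d_gt0 b_best; apply/eqP/negPn/negP => b_neq_a.
have := b_best a; rewrite !g2_tilted_price eqxx (negPf b_neq_a) mul1r mul0r.
lra.
Qed.

Lemma g1_tilted_price (a : 'I_k) (d : R) :
  g1 u1 (tilted_price a d) a = u1 a + u2 a - avg2 u2 - d + d / k%:R.
Proof. by rewrite /g1 /tilted_price eqxx mul1r; ring. Qed.

Lemma SPNE_value_le_avg2 (s1 : priceP R k) (s2 : priceP R k -> 'I_k) :
  is_SPNE u1 u2 s1 s2 -> g2 u2 (proj1_sig s1) (s2 s1) <= avg2 u2.
Proof.
move=> [best_reply no_deviation]; set a := s2 s1.
rewrite leNgt; apply/negP => avg_lt.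
set d := g2 u2 (proj1_sig s1) a - avg2 u2.
have d_gt0 : 0 < d by rewrite subr_gt0.
have gain_gt0 : 0 < d / k%:R by rewrite divr_gt0 ?(natr_ord_gt0 a).
pose q : priceP R k := exist _ _ (tilted_price_in_P a d).
have q_reply : s2 q = a by apply: best_reply_tilted_price d_gt0 (best_reply q).
have := no_deviation q; rewrite q_reply g1_tilted_price.
by move: d_gt0 gain_gt0; rewrite /d /g1 /g2; lra.
Qed.

End PriceAndChoose.

Theorem mainTheorem3 (R : realFieldType) (k : nat) (u1 u2 : 'I_k -> R)
  (s1 : priceP R k) (s2 : priceP R k -> 'I_k) :
  is_SPNE u1 u2 s1 s2 ->
  forall j : 'I_k, proj1_sig s1 j = u2 j - avg2 u2.
Proof.
move=> spne; have value_le := SPNE_value_le_avg2 spne.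
have g2_le_avg2 : forall j, g2 u2 (proj1_sig s1) j <= avg2 u2.
  by move=> j; apply: le_trans value_le; exact: spne.1.
move=> j; have := eq_const_of_sum_le g2_le_avg2 (sum_g2 u2 (proj2_sig s1)) j.
by rewrite /g2 => <-; ring.
Qed.
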